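(* For every integer $n \geq 2$, $D_n = (n-1)\left[D_{n-1} + D_{n-2}\right] + (-1)^{n-1}$, with the convention $D_0 = 0$.
   Context: A linear arrangement of $\{1,\ldots,n\}$ is a sequence $a_1\cdots a_n$ in which each of $1,\ldots,n$ appears exactly once. It contains the pattern $ij$ if $a_t=i$ and $a_{t+1}=j$ for some $t$; otherwise it avoids it. $D_n$ is the number of linear arrangements of $\{1,\ldots,n\}$ avoiding all of the patterns $12, 23, \ldots, (n-1)n, n1$; $D_0=0$. *)

From mathcomp Require Import all_boot all_algebra.
Set Implicit Arguments. Unset Strict Implicit. Unset Printing Implicit Defensive.

(* The list
   [permutations (iota 1 n)] enumerates all of them without duplicates. *)
Definition arrangements (n : nat) : seq (seq nat) := permutations (iota 1 n).

Definition contains_pat (a : seq nat) (i j : nat) : bool :=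
  has (fun t => (nth 0 a t == i) && (nth 0 a t.+1 == j)) (iota 0 (size a).-1).

Definition patterns (n : nat) : seq (nat * nat) :=
  [seq (i, i.+1) | i <- iota 1 n.-1] ++ [:: (n, 1)].

Definition avoids_all (n : nat) (a : seq nat) : bool :=
  all (fun p => ~~ contains_pat a p.1 p.2) (patterns n).

Definition D (n : nat) : nat :=
  if n == 0 then 0 else count (avoids_all n) (arrangements n).

(* Deletion-contraction for arrangements avoiding forbidden adjacencies: among the
   arrangements of U avoiding a list E, those that contain the adjacency x y and avoid the
   rest of E correspond, by deleting y, to the arrangements of U minus y avoiding E with y
   renamed to x.  For a path with k edges in an n-set this gives the counts P(n, 0) = n!,
   P(n, k+1) = P(n, k) - P(n-1, k); for the cycle 1 2 ... n 1 it gives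
   D_(n+1) = P(n+1, n) - D_n.  The counts Q_n = P(n, n-1) = D_n + D_(n-1) of succession-free
   arrangements satisfy Q_(n+2) = (n+1) Q_(n+1) + n Q_n, by induction on k in the recurrence
   for P; eliminating Q yields the recurrence for D by induction on n. *)

From mathcomp Require Import all_boot all_algebra.
From mathcomp Require Import ring.
Import GRing.Theory.

Set Implicit Arguments.
Unset Strict Implicit.
Unset Printing Implicit Defensive.

Lemma leq_count_cancel (T1 T2 : eqType) (s1 : seq T1) (s2 : seq T2)
    (P : pred T1) (Q : pred T2) (f : T1 -> T2) (g : T2 -> T1) :
  uniq s1 -> {in s1, forall a, P a -> [/\ f a \in s2, Q (f a) & g (f a) = a]} ->
  count P s1 <= count Q s2.
Proof.
move=> uniq_s1 fP; rewrite -!size_filter -(size_map f); apply: uniq_leq_size.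
  rewrite map_inj_in_uniq ?filter_uniq // => a b.
  rewrite !mem_filter => /andP[Pa a_s1] /andP[Pb b_s1] fab.
  by have [_ _ <-] := fP a a_s1 Pa; have [_ _ <-] := fP b b_s1 Pb; rewrite fab.
move=> b /mapP[a]; rewrite mem_filter => /andP[Pa a_s1] ->.
by have [fa_s2 Qfa _] := fP a a_s1 Pa; rewrite mem_filter Qfa.
Qed.

Lemma count_bij (T1 T2 : eqType) (s1 : seq T1) (s2 : seq T2)
    (P : pred T1) (Q : pred T2) (f : T1 -> T2) (g : T2 -> T1) :
  uniq s1 -> uniq s2 ->
  {in s1, forall a, P a -> [/\ f a \in s2, Q (f a) & g (f a) = a]} ->
  {in s2, forall b, Q b -> [/\ g b \in s1, P (g b) & f (g b) = b]} ->
  count P s1 = count Q s2.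
Proof.
move=> uniq_s1 uniq_s2 fP gQ.
by apply/anti_leq; rewrite (leq_count_cancel _ fP) ?(leq_count_cancel _ gQ).
Qed.

Section Adjacency.
Variable T : eqType.
Implicit Types (x y z u v : T) (s p q t : seq T).

Definition adj s : seq (T * T) := zip s (behead s).

Lemma adj_cons2 x y s : adj [:: x, y & s] = (x, y) :: adj (y :: s).
Proof. by []. Qed.

Lemma adj_cat p z q : adj (p ++ z :: q) = adj (rcons p z) ++ adj (z :: q).
Proof. by elim: p => [|x [|y p] IH] //; rewrite !cat_cons adj_cons2 -cat_cons IH. Qed.

Lemma adj_rcons x s z : adj (rcons (x :: s) z) = rcons (adj (x :: s)) (last x s, z).
Proof.
by elim: s x => [|y s IH] x //; rewrite rcons_cons [LHS]adj_cons2 -rcons_cons IH.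
Qed.

Lemma adj_map (f : T -> T) s :
  adj (map f s) = map (fun e => (f e.1, f e.2)) (adj s).
Proof. by elim: s => [|x [|y s] IH] //; rewrite map_cons [LHS]adj_cons2 -map_cons IH. Qed.

Lemma mem_adj u v z t : (u, v) \in adj (z :: t) -> (u \in belast z t) && (v \in t).
Proof.
elim: t z => [|w t IH] z //; rewrite adj_cons2 /= !in_cons xpair_eqE.
by case/orP=> [/andP[-> ->] // | /IH/andP[-> ->]]; rewrite !orbT.
Qed.

Lemma mem_adj_rcons u v p z : (u, v) \in adj (rcons p z) -> u \in p.
Proof. by case: p => [|w p] // /mem_adj; rewrite belast_rcons => /andP[]. Qed.

Lemma mem_adj_neq u v z t : u != z -> ((u, v) \in adj (z :: t)) = ((u, v) \in adj t).
Proof. by case: t => [|w t] // uz; rewrite adj_cons2 in_cons xpair_eqE (negbTE uz). Qed.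

Lemma mem_adj_head z v t : z \notin t -> ((z, v) \in adj (z :: t)) = (ohead t == Some v).
Proof.
case: t => [|w t] // zt; rewrite adj_cons2 in_cons xpair_eqE eqxx eq_sym /=.
have /negbTE-> : (z, v) \notin adj (w :: t).
  by apply: contra zt => /mem_adj/andP[/mem_belast].
by rewrite orbF.
Qed.

Lemma adj_split x y s : (x, y) \in adj s -> exists p q, s = p ++ x :: y :: q.
Proof.
elim: s => [|z [|w s] IH] //; rewrite adj_cons2 in_cons xpair_eqE.
case/orP=> [/andP[/eqP-> /eqP->] | /IH[p [q ->]]]; first by exists [::], s.
by exists (z :: p), q.
Qed.

Lemma mem_adj_mid p x y q : (x, y) \in adj (p ++ x :: y :: q).
Proof. by rewrite adj_cat adj_cons2 mem_cat in_cons eqxx orbT. Qed.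

Lemma uniq_adj_loop x s : uniq s -> (x, x) \notin adj s.
Proof.
move=> uniq_s; apply/negP => /adj_split[p [q s_eq]]; move: uniq_s.
by rewrite s_eq cat_uniq /= in_cons eqxx /= !andbF.
Qed.

Lemma uniq_cons2 x y t : uniq [:: x, y & t] = [&& x != y, x \notin t, y \notin t & uniq t].
Proof. by rewrite /= inE negb_or -!andbA. Qed.

Lemma rem_contract p x y q :
  y \notin p -> x != y -> rem y (p ++ x :: y :: q) = p ++ x :: q.
Proof.
move=> + xy; elim: p => [|z p IH] /=; first by rewrite (negbTE xy) eqxx.
by rewrite in_cons negb_or eq_sym => /andP[/negbTE-> /IH->].
Qed.

Definition merge x y z := if z == y then x else z.

Definition merge_pair x y (e : T * T) := (merge x y e.1, merge x y e.2).

Lemma mem_adj_contract p x y q u v :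
    uniq (p ++ x :: y :: q) -> u != x -> v != y ->
  ((u, v) \in adj (p ++ x :: y :: q)) = (merge_pair x y (u, v) \in adj (p ++ x :: q)).
Proof.
rewrite cat_uniq uniq_cons2 /= !negb_or.
move=> /and3P[_ /and3P[xNp yNp _] /and4P[_ xNq yNq _]] ux vy.
rewrite !adj_cat adj_cons2 !mem_cat in_cons xpair_eqE (negbTE ux).
rewrite /merge_pair /merge /= (negbTE vy).
have [-> | uy] := eqVneq u y.
  rewrite !(mem_adj_head _ xNq, mem_adj_head _ yNq).
  have /negbTE-> : (y, v) \notin adj (rcons p x) by apply: contra yNp => /mem_adj_rcons.
  by have /negbTE-> : (x, v) \notin adj (rcons p x) by apply: contra xNp => /mem_adj_rcons.
by rewrite !mem_adj_neq.
Qed.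

Fixpoint insert_after x y s :=
  if s is z :: s' then if z == x then z :: y :: s' else z :: insert_after x y s' else [::].

Lemma insert_after_cat x y p q :
  x \notin p -> insert_after x y (p ++ x :: q) = p ++ x :: y :: q.
Proof.
elim: p => [|z p IH] /=; first by rewrite eqxx.
by rewrite in_cons negb_or eq_sym => /andP[/negbTE-> /IH->].
Qed.

Lemma perm_contract U p x y q : y \in U ->
  perm_eq (p ++ x :: y :: q) U = perm_eq (p ++ x :: q) (rem y U).
Proof.
move=> yU; rewrite (permPr (perm_to_rem yU)).
have -> : p ++ x :: y :: q = (p ++ [:: x]) ++ [:: y] ++ q by rewrite -catA.
by rewrite perm_catCA /= -catA perm_cons.
Qed.

Definition avoids (E : seq (T * T)) a := all (fun e => e \notin adj a) E.

Definition n_avoiders U E := count (avoids E) (permutations U).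

Lemma avoids_contract p x y q E :
    uniq (p ++ x :: y :: q) -> {in E, forall e, (e.1 != x) && (e.2 != y)} ->
  avoids E (p ++ x :: y :: q) = avoids (map (merge_pair x y) E) (p ++ x :: q).
Proof.
move=> uniq_a E_xy; rewrite /avoids all_map.
by apply: eq_in_all => -[u v] /E_xy /andP[ux vy] /=; rewrite (mem_adj_contract uniq_a ux vy).
Qed.

Lemma count_contract U x y E : uniq U -> x \in U -> y \in U -> x != y ->
    {in E, forall e, (e.1 != x) && (e.2 != y)} ->
  count (fun a => ((x, y) \in adj a) && avoids E a) (permutations U) =
  n_avoiders (rem y U) (map (merge_pair x y) E).
Proof.
move=> uniq_U xU yU xy E_xy.
apply: (count_bij (f := rem y) (g := insert_after x y)); rewrite ?permutations_uniq //.
  move=> a; rewrite mem_permutations => perm_aU /andP[/adj_split[p [q a_eq]] avE].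
  subst a; have uniq_a : uniq (p ++ x :: y :: q) by rewrite (perm_uniq perm_aU).
  have [xNp yNp] : x \notin p /\ y \notin p.
    by move: uniq_a; rewrite cat_uniq /= !in_cons !negb_or => /and3P[_ /and3P[]].
  rewrite rem_contract // mem_permutations -perm_contract // perm_aU.
  by rewrite -avoids_contract // insert_after_cat.
move=> b; rewrite mem_permutations => perm_b avE'.
have uniq_b : uniq b by rewrite (perm_uniq perm_b) rem_uniq.
have xb : x \in b by rewrite (perm_mem perm_b) (mem_rem_uniq _ uniq_U) inE xy xU.
have yNb : y \notin b by rewrite (perm_mem perm_b) (mem_rem_uniqF _ uniq_U).
case/splitPr: xb => p q in perm_b uniq_b avE' yNb *.
have xNp : x \notin p by move: uniq_b; rewrite cat_uniq /= => /and3P[_ /norP[]].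
have yNp : y \notin p by move: yNb; rewrite mem_cat negb_or => /andP[].
have perm_a : perm_eq (p ++ x :: y :: q) U by rewrite perm_contract.
have uniq_a : uniq (p ++ x :: y :: q) by rewrite (perm_uniq perm_a).
rewrite insert_after_cat // mem_permutations perm_a mem_adj_mid avoids_contract //.
by rewrite rem_contract.
Qed.

Lemma n_avoiders_nil U : uniq U -> n_avoiders U [::] = (size U)`!.
Proof. by move=> uniq_U; rewrite -size_permutations // -count_predT. Qed.

Lemma n_avoiders_delete_contract U x y t :
    uniq U -> x \in U -> y \in U -> x != y -> y \notin t -> x \notin belast y t ->
  n_avoiders U (adj (y :: t)) =
  n_avoiders U (adj [:: x, y & t]) + n_avoiders (rem y U) (adj (x :: t)).
Proof.
move=> uniq_U xU yU xy yNt xNbt.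
have adj_xt : adj (x :: t) = map (merge_pair x y) (adj (y :: t)).
  have -> : x :: t = map (merge x y) (y :: t).
    rewrite /= {1}/merge eqxx map_id_in // => z zt.
    by rewrite /merge; case: eqP zt yNt => // -> ->.
  by rewrite adj_map.
rewrite adj_xt -count_contract //; last first.
  move=> [u v] /mem_adj/andP[u_bt v_t] /=.
  by apply/andP; split; [apply: contraTneq u_bt => -> | apply: contraTneq v_t => ->].
rewrite /n_avoiders -[LHS]size_filter -(count_predC (fun a => (x, y) \in adj a)).
by rewrite !count_filter addnC.
Qed.

Lemma subset_rem_cons2 U x y t : uniq U -> uniq [:: x, y & t] ->
  {subset [:: x, y & t] <= U} -> {subset x :: t <= rem y U}.
Proof.
move=> uniq_U; rewrite uniq_cons2 => /and4P[xy _ yNt _] sub z zxt.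
rewrite (mem_rem_uniq _ uniq_U) inE sub ?andbT; last first.
  by move: zxt; rewrite !inE => /orP[-> | ->]; rewrite ?orbT.
by apply: contraTneq zxt => ->; rewrite inE negb_or eq_sym xy.
Qed.

End Adjacency.

Local Open Scope ring_scope.

Fixpoint path_avoiders n k : int :=
  if k is k'.+1 then path_avoiders n k' - path_avoiders n.-1 k' else n`!%:Z.

Fixpoint cycle_avoiders n k : int :=
  if k is k'.+1 then path_avoiders n k - cycle_avoiders n.-1 k' else n`!%:Z.

Lemma path_avoidersS n k : path_avoiders n k.+1 = path_avoiders n k - path_avoiders n.-1 k.
Proof. by []. Qed.

Lemma cycle_avoidersS n k :
  cycle_avoiders n k.+1 = path_avoiders n k.+1 - cycle_avoiders n.-1 k.
Proof. by []. Qed.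

(* The hypothesis [k < n] is needed: for longer paths the truncated [n.-1] produces junk. *)
Lemma path_avoiders_rec n k : (k < n)%N ->
  path_avoiders n.+1 k.+1 = n%:Z * path_avoiders n k + k%:Z * path_avoiders n.-1 k.-1.
Proof.
elim: k n => [|k IH] n lt_kn.
  by rewrite path_avoidersS mul0r addr0 /= factS PoszM; ring.
case: n lt_kn => // n lt_kn.
have eA : path_avoiders n.+1 k = path_avoiders n k + path_avoiders n.+1 k.+1.
  by rewrite path_avoidersS addrC subrK.
rewrite [LHS]path_avoidersS (IH n.+1 (ltnW lt_kn)) eA (IH n lt_kn).
case: k {IH lt_kn eA} => [|k]; first by ring.
by rewrite !succnK path_avoidersS; ring.
Qed.

Section PathsAndCycles.
Variable T : eqType.
Implicit Types (x y : T) (t U : seq T).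

Lemma n_avoiders_path U x t : uniq U -> uniq (x :: t) -> {subset x :: t <= U} ->
  (n_avoiders U (adj (x :: t)))%:Z = path_avoiders (size U) (size t).
Proof.
elim: t x U => [|y t IH] x U uniq_U; first by rewrite n_avoiders_nil.
move=> uniq_xyt sub; have sub_xt := subset_rem_cons2 uniq_U uniq_xyt sub.
have [xU yU] : x \in U /\ y \in U by split; apply: sub; rewrite !inE eqxx ?orbT.
move: uniq_xyt; rewrite uniq_cons2 => /and4P[xy xNt yNt uniq_t].
have [uniq_xt uniq_yt] : uniq (x :: t) /\ uniq (y :: t) by rewrite !cons_uniq xNt yNt.
have sub_yt : {subset y :: t <= U} by move=> z zyt; apply: sub; rewrite inE zyt orbT.
have xNbt : x \notin belast y t.
  by apply/negP => /mem_belast; rewrite inE (negbTE xy) (negbTE xNt).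
rewrite path_avoidersS -(IH y U) // -(size_rem yU) -(IH x (rem y U)) ?rem_uniq //.
by rewrite (n_avoiders_delete_contract uniq_U xU yU xy yNt xNbt) PoszD addrK.
Qed.

Lemma n_avoiders_cycle U x t : uniq U -> uniq (x :: t) -> {subset x :: t <= U} ->
  (n_avoiders U (adj (rcons (x :: t) x)))%:Z = cycle_avoiders (size U) (size t).
Proof.
elim: t U => [|y t IH] U uniq_U.
  move=> _ _; rewrite [RHS]/= -n_avoiders_nil //; congr Posz; apply: eq_in_count => a.
  rewrite mem_permutations => /perm_uniq uniq_a.
  by rewrite /avoids /= andbT uniq_adj_loop ?uniq_a.
move=> uniq_xyt sub; have sub_xt := subset_rem_cons2 uniq_U uniq_xyt sub.
have [xU yU] : x \in U /\ y \in U by split; apply: sub; rewrite !inE eqxx ?orbT.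
move: uniq_xyt; rewrite uniq_cons2 => /and4P[xy xNt yNt uniq_t].
have yNtx : y \notin rcons t x by rewrite mem_rcons inE negb_or eq_sym xy.
have xNbtx : x \notin belast y (rcons t x) by rewrite belast_rcons inE negb_or xy.
have path_ytx : (n_avoiders U (adj (y :: rcons t x)))%:Z = path_avoiders (size U) (size t).+1.
  rewrite n_avoiders_path ?size_rcons // ?cons_uniq ?yNtx ?rcons_uniq ?xNt //.
  by move=> z; rewrite in_cons mem_rcons in_cons orbCA -!in_cons; apply: sub.
have uniq_xt : uniq (x :: t) by rewrite cons_uniq xNt.
rewrite cycle_avoidersS -path_ytx -(size_rem yU) -(IH (rem y U)) ?rem_uniq //.
by rewrite (n_avoiders_delete_contract uniq_U xU yU xy yNtx xNbtx) PoszD addrK.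
Qed.

End PathsAndCycles.

Lemma contains_patE a i j : contains_pat a i j = ((i, j) \in adj a).
Proof.
rewrite /contains_pat; elim: a => [|z [|w a] IH] //.
rewrite adj_cons2 in_cons xpair_eqE -IH /= (iotaDl 1 0) has_map [z == i]eq_sym [w == j]eq_sym.
by congr (_ || _); apply: eq_has => t /=; rewrite add1n.
Qed.

Lemma adj_iota a n : adj (iota a n.+1) = [seq (i, i.+1) | i <- iota a n].
Proof. by elim: n a => [|n IH] a //; rewrite adj_cons2 IH. Qed.

Lemma patterns_adj n : patterns n.+1 = adj (rcons (iota 1 n.+1) 1).
Proof.
have last_iota m a : last a (iota a.+1 m) = (a + m)%N.
  by elim: m a => [|m IH] a /=; rewrite ?addn0 // IH addSnnS.
by rewrite adj_rcons adj_iota last_iota -cats1.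
Qed.

Lemma D_cycle_avoiders n : (D n.+1)%:Z = cycle_avoiders n.+1 n.
Proof.
have := n_avoiders_cycle (x := 1) (t := iota 2 n)
  (iota_uniq 1 n.+1) (iota_uniq 1 n.+1) (fun _ => id).
rewrite !size_iota => <-.
congr Posz; apply: eq_count => a; rewrite /avoids_all patterns_adj.
by apply: eq_all => -[i j]; rewrite contains_patE.
Qed.

Lemma path_avoiders_D n : path_avoiders n.+1 n = (D n.+1)%:Z + (D n)%:Z.
Proof.
case: n => [|n]; first by rewrite D_cycle_avoiders.
by rewrite !D_cycle_avoiders cycle_avoidersS subrK.
Qed.

Theorem corollary3p3 (n : nat) : (2 <= n)%N ->
  (D n)%:Z = (n.-1)%:Z * ((D n.-1)%:Z + (D n.-2)%:Z) + (-1) ^+ n.-1.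
Proof.
case: n => [|[|n]] // _; rewrite !succnK.
elim: n => [|n IH]; first by [].
have := path_avoiders_rec (ltnSn n.+1); rewrite !succnK !path_avoiders_D => rec.
by apply: (addIr (D n.+2)%:Z); rewrite rec IH !exprS; ring.
Qed.
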